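(* Let $0<f_1<f_2<f_3$ and consider on $M_h$ with $2h=1$ the reduced Lamé integrable system $(F_L,G_L)$, where $F_L=\ell_{12}^2+\ell_{13}^2+\ell_{14}^2$ and $G_L=f_1\ell_{34}^2+f_2\ell_{24}^2+f_3\ell_{23}^2$. The set of critical values of the momentum map $(F_L,G_L):M_h\to\mathbb R^2$ is composed of (parts of) the four straight lines $\mathfrak L_j: F_L=1-\frac{1}{f_j}G_L$ for $j=1,2,3$ and $\mathfrak L_4: F_L=0$.
   Context: $\mathbf L=(\ell_{12},\ell_{13},\ell_{14},\ell_{23},\ell_{24},\ell_{34})\in\mathbb R^6\cong\mathfrak{so}(4)^*$ with the Lie–Poisson bracket of $\mathfrak{so}(4)$ (extending $\ell_{ji}=-\ell_{ij}$: $\{\ell_{ij},\ell_{jk}\}=-\ell_{ik}$ for distinct $i,j,k$, and $\{\ell_{ij},\ell_{kl}\}=0$ when $\{i,j\}\cap\{k,l\}=\emptyset$). $M_h=\{\mathbf L:\sum_{i<j}\ell_{ij}^2=2h,\ \ell_{12}\ell_{34}-\ell_{13}\ell_{24}+\ell_{14}\ell_{23}=0\}\cong S^2\times S^2$ is a symplectic leaf. This system arises from separating the geodesic flow on $S^3$ in Lamé coordinates. *)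

From Stdlib Require Import Reals.
From Coquelicot Require Import Coquelicot.
Open Scope R_scope.

Record so4 := mk_so4 { l12 : R; l13 : R; l14 : R; l23 : R; l24 : R; l34 : R }.

Definition shift (p : so4) (t : R) (v : so4) : so4 :=
  mk_so4 (l12 p + t * l12 v) (l13 p + t * l13 v) (l14 p + t * l14 v)
         (l23 p + t * l23 v) (l24 p + t * l24 v) (l34 p + t * l34 v).

Definition ddir (f : so4 -> R) (p v : so4) : R :=
  Derive (fun t => f (shift p t v)) 0.

Definition Cas1 (p : so4) : R :=
  l12 p ^ 2 + l13 p ^ 2 + l14 p ^ 2 + l23 p ^ 2 + l24 p ^ 2 + l34 p ^ 2.
Definition Cas2 (p : so4) : R :=
  l12 p * l34 p - l13 p * l24 p + l14 p * l23 p.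

Definition Mh (h : R) (p : so4) : Prop := Cas1 p = 2 * h /\ Cas2 p = 0.

(* tangent space of M_h at p (M_h is a regular level set of (Cas1,Cas2)) *)
Definition tangent (p v : so4) : Prop := ddir Cas1 p v = 0 /\ ddir Cas2 p v = 0.

Definition FL (p : so4) : R := l12 p ^ 2 + l13 p ^ 2 + l14 p ^ 2.
Definition GL (f1 f2 f3 : R) (p : so4) : R :=
  f1 * l34 p ^ 2 + f2 * l24 p ^ 2 + f3 * l23 p ^ 2.

Definition critical_point (F G : so4 -> R) (h : R) (p : so4) : Prop :=
  Mh h p /\
  exists a b : R, (a <> 0 \/ b <> 0) /\
    forall v, tangent p v -> a * ddir F p v + b * ddir G p v = 0.

Definition critical_value (F G : so4 -> R) (h x y : R) : Prop :=
  exists p, critical_point F G h p /\ F p = x /\ G p = y.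

(** At a point [p] of [M_h] the vectors [[p, ξ]] (the coadjoint action of
    [ξ ∈ so(4)]) are tangent to [M_h], and [F_L] is invariant under the
    rotations [ξ ∈ so(3)] fixing the first axis.  So at a critical point either
    [dF_L] vanishes on [T_pM_h], or [dG_L] vanishes along these rotations.
    In the first case the Lagrange identity
    [F_L (|L|^2 - F_L) = E_1^2 + E_2^2 + E_3^2 + Cas2^2], with [E_i] the
    components of [dF_L] along the rotations moving the first axis, forces
    [F_L ∈ {0, 1}].  In the second case [dG_L] along the three so(3)
    rotations is [(f_i - f_j) ℓ ℓ'], so at most one of [ℓ23, ℓ24, ℓ34] is
    nonzero and [F_L = 1 - G_L / f_j].  Conversely, explicit points with a
    Lagrange multiplier sweep out a segment of each of the four lines. *)

From Stdlib Require Import Reals Lia Lra Psatz.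
From Coquelicot Require Import Coquelicot.
Open Scope R_scope.

Ltac compute_ddir :=
  unfold ddir; apply is_derive_unique; unfold Cas1, Cas2, FL, GL, shift; simpl;
  auto_derive; [trivial | ring].

Lemma ddir_Cas1 p v : ddir Cas1 p v =
  2 * (l12 p * l12 v + l13 p * l13 v + l14 p * l14 v + l23 p * l23 v
       + l24 p * l24 v + l34 p * l34 v).
Proof. compute_ddir. Qed.

Lemma ddir_Cas2 p v : ddir Cas2 p v =
  l12 p * l34 v + l34 p * l12 v - l13 p * l24 v - l24 p * l13 v
  + l14 p * l23 v + l23 p * l14 v.
Proof. compute_ddir. Qed.

Lemma ddir_FL p v : ddir FL p v =
  2 * (l12 p * l12 v + l13 p * l13 v + l14 p * l14 v).
Proof. compute_ddir. Qed.

Lemma ddir_GL f1 f2 f3 p v : ddir (GL f1 f2 f3) p v =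
  2 * (f1 * l34 p * l34 v + f2 * l24 p * l24 v + f3 * l23 p * l23 v).
Proof. compute_ddir. Qed.

(* The coadjoint action of [ξ] on [p], written under [so(4)^* ≅ so(4)] as the
   commutator [P X - X P] of the skew-symmetric matrices [P_ij = l_ij p],
   [X_ij = l_ij ξ] (i < j). *)
Definition bracket (p ξ : so4) : so4 :=
  mk_so4
    (l13 ξ * l23 p - l13 p * l23 ξ + l14 ξ * l24 p - l14 p * l24 ξ)
    (l12 p * l23 ξ - l12 ξ * l23 p - l14 p * l34 ξ + l14 ξ * l34 p)
    (l12 p * l24 ξ - l12 ξ * l24 p + l13 p * l34 ξ - l13 ξ * l34 p)
    (l12 ξ * l13 p - l12 p * l13 ξ + l24 ξ * l34 p - l24 p * l34 ξ)
    (l12 ξ * l14 p - l12 p * l14 ξ + l23 p * l34 ξ - l23 ξ * l34 p)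
    (l13 ξ * l14 p - l13 p * l14 ξ + l23 ξ * l24 p - l23 p * l24 ξ).

Lemma tangent_bracket p ξ : tangent p (bracket p ξ).
Proof. split; [rewrite ddir_Cas1 | rewrite ddir_Cas2]; simpl; ring. Qed.

Lemma ddir_FL_bracket p ξ : ddir FL p (bracket p ξ) =
  2 * (- l12 ξ * (l13 p * l23 p + l14 p * l24 p)
       + l13 ξ * (l12 p * l23 p - l14 p * l34 p)
       + l14 ξ * (l12 p * l24 p + l13 p * l34 p)).
Proof. rewrite ddir_FL; simpl; ring. Qed.

Lemma ddir_GL_bracket_so3 f1 f2 f3 p x23 x24 x34 :
  ddir (GL f1 f2 f3) p (bracket p (mk_so4 0 0 0 x23 x24 x34)) =
  2 * (x23 * (f1 - f2) * (l24 p * l34 p) + x24 * (f3 - f1) * (l23 p * l34 p)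
       + x34 * (f2 - f3) * (l23 p * l24 p)).
Proof. rewrite ddir_GL; simpl; ring. Qed.

Lemma critical_point_of_multipliers F G h p a b c :
  Mh h p -> (a <> 0 \/ b <> 0) ->
  (forall v, a * ddir F p v + b * ddir G p v = c * ddir Cas1 p v) ->
  critical_point F G h p.
Proof.
  intros HM Hab Hmult; split; [exact HM |].
  exists a, b; split; [exact Hab |].
  intros v [Hv _]; rewrite Hmult, Hv; ring.
Qed.

Section Lame.

Variables f1 f2 f3 : R.

Notation G := (GL f1 f2 f3).

Lemma critical_point_cases h p : critical_point FL G h p ->
  (forall ξ, ddir FL p (bracket p ξ) = 0) \/
  (forall x23 x24 x34, ddir G p (bracket p (mk_so4 0 0 0 x23 x24 x34)) = 0).
Proof.
  intros [_ [a [b [Hab Hdep]]]].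
  destruct (Req_dec b 0) as [Hb | Hb].
  - left; intros ξ.
    assert (Ha : a <> 0) by (destruct Hab; [assumption | contradiction]).
    specialize (Hdep _ (tangent_bracket p ξ)); rewrite Hb in Hdep.
    apply (Rmult_eq_reg_l a); [lra | exact Ha].
  - right; intros x23 x24 x34.
    specialize (Hdep _ (tangent_bracket p (mk_so4 0 0 0 x23 x24 x34))).
    rewrite ddir_FL_bracket in Hdep; simpl in Hdep.
    apply (Rmult_eq_reg_l b); [lra | exact Hb].
Qed.

Lemma FL_critical_levels h p : Mh h p ->
  (forall ξ, ddir FL p (bracket p ξ) = 0) -> FL p = 0 \/ FL p = 2 * h.
Proof.
  intros [HC1 HC2] HdF.
  set (E1 := l13 p * l23 p + l14 p * l24 p).
  set (E2 := l12 p * l23 p - l14 p * l34 p).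
  set (E3 := l12 p * l24 p + l13 p * l34 p).
  assert (HE : E1 ^ 2 + E2 ^ 2 + E3 ^ 2 = 0).
  { specialize (HdF (mk_so4 (- E1) E2 E3 0 0 0)).
    rewrite ddir_FL_bracket in HdF; simpl in HdF; unfold E1, E2, E3 in *; lra. }
  assert (Hlagrange : FL p * (2 * h - FL p) = E1 ^ 2 + E2 ^ 2 + E3 ^ 2 + Cas2 p ^ 2).
  { rewrite <- HC1; unfold FL, Cas1, Cas2, E1, E2, E3; ring. }
  rewrite HE, HC2, Rplus_0_l, pow_i in Hlagrange by lia.
  destruct (Rmult_integral _ _ Hlagrange); [left | right]; lra.
Qed.

Lemma GL_critical_products p : f1 <> f2 -> f1 <> f3 -> f2 <> f3 ->
  (forall x23 x24 x34, ddir G p (bracket p (mk_so4 0 0 0 x23 x24 x34)) = 0) ->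
  l24 p * l34 p = 0 /\ l23 p * l34 p = 0 /\ l23 p * l24 p = 0.
Proof.
  intros H12 H13 H23 HdG.
  pose proof (HdG 1 0 0) as H1; pose proof (HdG 0 1 0) as H2;
    pose proof (HdG 0 0 1) as H3.
  rewrite ddir_GL_bracket_so3 in H1, H2, H3.
  repeat split.
  - apply (Rmult_eq_reg_l (2 * (f1 - f2))); [lra | intro; lra].
  - apply (Rmult_eq_reg_l (2 * (f3 - f1))); [lra | intro; lra].
  - apply (Rmult_eq_reg_l (2 * (f2 - f3))); [lra | intro; lra].
Qed.

Lemma on_lines_of_products p : f1 <> 0 -> f2 <> 0 -> f3 <> 0 -> Mh (/ 2) p ->
  l24 p * l34 p = 0 -> l23 p * l34 p = 0 -> l23 p * l24 p = 0 ->
  FL p = 1 - G p / f1 \/ FL p = 1 - G p / f2 \/ FL p = 1 - G p / f3.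
Proof.
  intros Hf1 Hf2 Hf3 [HC1 _] P1 P2 P3.
  unfold Cas1 in HC1; unfold FL, GL.
  destruct (Req_dec (l34 p) 0) as [Z34 | Z34].
  - destruct (Req_dec (l24 p) 0) as [Z24 | Z24].
    + right; right; rewrite Z34, Z24 in *; field_simplify; lra.
    + assert (Z23 : l23 p = 0) by (apply (Rmult_eq_reg_r (l24 p)); lra).
      right; left; rewrite Z34, Z23 in *; field_simplify; lra.
  - assert (Z23 : l23 p = 0) by (apply (Rmult_eq_reg_r (l34 p)); lra).
    assert (Z24 : l24 p = 0) by (apply (Rmult_eq_reg_r (l34 p)); lra).
    left; rewrite Z23, Z24 in *; field_simplify; lra.
Qed.

Lemma critical_point_on_lines p : 0 < f1 -> f1 < f2 -> f2 < f3 ->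
  critical_point FL G (/ 2) p ->
  FL p = 1 - G p / f1 \/ FL p = 1 - G p / f2 \/ FL p = 1 - G p / f3 \/ FL p = 0.
Proof.
  intros H1 H12 H23 Hp.
  assert (HM : Mh (/ 2) p) by apply Hp.
  assert (Hprod : (l24 p * l34 p = 0 /\ l23 p * l34 p = 0 /\ l23 p * l24 p = 0)
                  \/ FL p = 0).
  { destruct (critical_point_cases _ _ Hp) as [HdF | HdG].
    - destruct (FL_critical_levels _ _ HM HdF) as [HF0 | HF1]; [right; exact HF0 | left].
      destruct HM as [HC1 _]; unfold FL, Cas1 in *.
      assert (Z23 : l23 p = 0) by nra; assert (Z24 : l24 p = 0) by nra.
      rewrite Z23, Z24; repeat split; ring.
    - left; apply GL_critical_products; lra || exact HdG. }
  destruct Hprod as [[P1 [P2 P3]] | HF0]; [| tauto].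
  destruct (on_lines_of_products p) as [? | [? | ?]]; auto; lra.
Qed.

Lemma critical_values_on_lines s t : s ^ 2 + t ^ 2 = 1 ->
  critical_value FL G (/ 2) (s ^ 2) (f1 * t ^ 2) /\
  critical_value FL G (/ 2) (s ^ 2) (f2 * t ^ 2) /\
  critical_value FL G (/ 2) (s ^ 2) (f3 * t ^ 2).
Proof.
  intros Hst.
  assert (HM : forall p, Cas1 p = s ^ 2 + t ^ 2 -> Cas2 p = 0 -> Mh (/ 2) p).
  { intros p HC1 HC2; split; [rewrite HC1, Hst; field | exact HC2]. }
  repeat split.
  - exists (mk_so4 0 s 0 0 0 t); split; [| unfold FL, GL; simpl; split; ring].
    apply (critical_point_of_multipliers _ _ _ _ f1 1 f1);
      [apply HM; unfold Cas1, Cas2; simpl; ring | right; lra |].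
    intros v; rewrite ddir_FL, ddir_GL, ddir_Cas1; simpl; ring.
  - exists (mk_so4 s 0 0 0 t 0); split; [| unfold FL, GL; simpl; split; ring].
    apply (critical_point_of_multipliers _ _ _ _ f2 1 f2);
      [apply HM; unfold Cas1, Cas2; simpl; ring | right; lra |].
    intros v; rewrite ddir_FL, ddir_GL, ddir_Cas1; simpl; ring.
  - exists (mk_so4 s 0 0 t 0 0); split; [| unfold FL, GL; simpl; split; ring].
    apply (critical_point_of_multipliers _ _ _ _ f3 1 f3);
      [apply HM; unfold Cas1, Cas2; simpl; ring | right; lra |].
    intros v; rewrite ddir_FL, ddir_GL, ddir_Cas1; simpl; ring.
Qed.

Lemma critical_values_FL_zero u w z : u ^ 2 + w ^ 2 + z ^ 2 = 1 ->
  critical_value FL G (/ 2) 0 (f1 * z ^ 2 + f2 * w ^ 2 + f3 * u ^ 2).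
Proof.
  intros Huwz; exists (mk_so4 0 0 0 u w z); split;
    [| unfold FL, GL; simpl; split; ring].
  apply (critical_point_of_multipliers _ _ _ _ 1 0 0); [| left; lra |].
  - split; unfold Cas1, Cas2; simpl; [| ring].
    transitivity (u ^ 2 + w ^ 2 + z ^ 2); [ring | rewrite Huwz; field].
  - intros v; rewrite ddir_FL, ddir_Cas1; simpl; ring.
Qed.

End Lame.

Theorem proposition6 (f1 f2 f3 : R) :
  0 < f1 -> f1 < f2 -> f2 < f3 ->
  (forall x y : R, critical_value FL (GL f1 f2 f3) (/ 2) x y ->
     x = 1 - y / f1 \/ x = 1 - y / f2 \/ x = 1 - y / f3 \/ x = 0) /\
  (exists x y, critical_value FL (GL f1 f2 f3) (/ 2) x y /\ x = 1 - y / f1) /\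
  (exists x y, critical_value FL (GL f1 f2 f3) (/ 2) x y /\ x = 1 - y / f2) /\
  (exists x y, critical_value FL (GL f1 f2 f3) (/ 2) x y /\ x = 1 - y / f3) /\
  (exists x y, critical_value FL (GL f1 f2 f3) (/ 2) x y /\ x = 0).
Proof.
  intros H1 H12 H23.
  (* Witnesses inside the four segments, lying on no other line. *)
  assert (Hst : (3 / 5) ^ 2 + (4 / 5) ^ 2 = 1) by field.
  destruct (critical_values_on_lines f1 f2 f3 _ _ Hst) as [HL1 [HL2 HL3]].
  repeat split.
  - intros x y [p [Hp [<- <-]]]; exact (critical_point_on_lines _ _ _ _ H1 H12 H23 Hp).
  - exists ((3 / 5) ^ 2), (f1 * (4 / 5) ^ 2); split; [exact HL1 | field; lra].
  - exists ((3 / 5) ^ 2), (f2 * (4 / 5) ^ 2); split; [exact HL2 | field; lra].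
  - exists ((3 / 5) ^ 2), (f3 * (4 / 5) ^ 2); split; [exact HL3 | field; lra].
  - exists 0, (f1 * 0 ^ 2 + f2 * (4 / 5) ^ 2 + f3 * (3 / 5) ^ 2); split; [| reflexivity].
    apply critical_values_FL_zero; field.
Qed.
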